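(* Let $\mathbf{P}=(P,\le,\mathcal T)$ be a $2$-separated topological poset in which the clopen final segments together with the clopen initial segments generate (form a subbase for) the topology $\mathcal T$. Then $\mathbf{P}$ is reflexive if and only if for every closed final segment $B\subseteq P$ and every closed initial segment $C\subseteq P$ with $C<B$, there exists a clopen final segment $u$ such that $B\subseteq u$ and $C\cap u=\emptyset$.
   Context: A topological poset $(P,\le,\mathcal T)$ is a poset with a Hausdorff topology; it is $2$-separated if it admits a continuous order-embedding into a power of the two-element chain $\mathbf{O}=(\{0,1\},\le)$, $0<1$, with the product topology. Final (initial) segments are upward (downward) closed subsets. For $A,B\subseteq P$, $C<B$ means $x<y$ for all $x\in C$, $y\in B$. Let $\mathbf{L}=(\{0,1\},\wedge,\vee,0,1)$ be the two-element bounded distributive lattice. $\mathbf{P}^*$ is the set of continuous order-preserving maps $P\to\{0,1\}$ with the bounded-lattice structure (pointwise $\wedge,\vee$, constants $0,1$) and the product topology induced from $\mathbf{L}^P$; $\mathbf{P}^{**}$ is the set of continuous bounded-lattice homomorphisms $\mathbf{P}^*\to\mathbf{L}$. $\mathbf{P}$ is reflexive if the evaluation map $P\to\mathbf{P}^{**}$, $x\mapsto(f\mapsto f(x))$, is onto. *)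

From HB Require Import structures.
From mathcomp Require Import all_boot all_order all_algebra.
From mathcomp Require Import all_classical all_reals all_analysis.
Set Implicit Arguments. Unset Strict Implicit. Unset Printing Implicit Defensive.
Local Open Scope classical_set_scope.

Definition is_poset (T : Type) (le : T -> T -> Prop) : Prop :=
  [/\ (forall x, le x x),
      (forall x y, le x y -> le y x -> x = y) &
      (forall x y z, le x y -> le y z -> le x z)].

Definition final_segment (T : Type) (le : T -> T -> Prop) (A : set T) : Prop :=
  forall x y, A x -> le x y -> A y.
Definition initial_segment (T : Type) (le : T -> T -> Prop) (A : set T) : Prop :=
  forall x y, A y -> le x y -> A x.

Definition set_lt (T : Type) (le : T -> T -> Prop) (C B : set T) : Prop :=
  forall x y, C x -> B y -> le x y /\ x <> y.

(* 2-separated: a continuous order-embedding into a power O^I of the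
   two-element chain 0 < 1 (bool with false < true, discrete topology),
   with the product topology. *)
Definition two_separated (T : topologicalType) (le : T -> T -> Prop) : Prop :=
  exists (I : Type) (e : T -> {ptws I -> bool}),
    continuous e /\
    forall x y, le x y <-> (forall i, e x i ==> e y i).

Definition clopen_segment (T : topologicalType) (le : T -> T -> Prop)
  (U : set T) : Prop :=
  clopen U /\ (final_segment le U \/ initial_segment le U).

Definition is_subbase (T : topologicalType) (S : set T -> Prop) : Prop :=
  forall A : set T, open A <->
    (forall x, A x -> exists (n : nat) (F : 'I_n -> set T),
        [/\ (forall i, S (F i)), (forall i, F i x) &
            (forall y, (forall i, F i y) -> A y)]).

(* P^* : continuous order-preserving maps P -> {0,1}, as a subset of
   L^P with the product topology. *)
Definition Pstar (T : topologicalType) (le : T -> T -> Prop)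
  : set {ptws T -> bool} :=
  [set f | continuous (f : T -> bool) /\ (forall x y, le x y -> f x ==> f y)].

Definition lattice_hom_on (T : topologicalType) (le : T -> T -> Prop)
  (h : {ptws T -> bool} -> bool) : Prop :=
  [/\ (forall f g, Pstar le f -> Pstar le g ->
         h ((fun x => f x && g x) : {ptws T -> bool}) = h f && h g),
      (forall f g, Pstar le f -> Pstar le g ->
         h ((fun x => f x || g x) : {ptws T -> bool}) = h f || h g),
      h ((fun _ => false) : {ptws T -> bool}) = false &
      h ((fun _ => true) : {ptws T -> bool}) = true].

(* P^** : continuous bounded-lattice homomorphisms P^* -> L, where P^* carries
   the subspace topology of the product topology (only the restriction of h
   to P^* matters). *)
Definition Pstarstar (T : topologicalType) (le : T -> T -> Prop)
  (h : {ptws T -> bool} -> bool) : Prop :=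
  lattice_hom_on le h /\ {within Pstar le, continuous h}.

Definition reflexive_tposet (T : topologicalType) (le : T -> T -> Prop) : Prop :=
  forall h, Pstarstar le h -> exists x : T, forall f, Pstar le f -> h f = f x.

From HB Require Import structures.
From mathcomp Require Import all_boot all_order all_algebra.
From mathcomp Require Import all_classical all_reals all_analysis.
Local Open Scope classical_set_scope.

(* Write B_h (resp. C_h) for the set of points at which every f in P^* with
   h f = 1 is 1 (resp. every f with h f = 0 is 0), for h in P^**.  A point of
   B_h and C_h represents h; otherwise 2-separation gives C_h < B_h.  A clopen
   final u separating them is impossible: u is covered by functions sent to 0,
   u is the pointwise limit of its meets with finite joins of them, so
   continuity of h gives h u = 0, and dually h u = 1.
   Conversely, if closed B and C with C < B admit no separator, the sets
   {f = 1, g = 0} with f in P^* above B and g in P^* vanishing on C generate a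
   proper filter.  Evaluation at an ultrafilter containing it is a continuous
   lattice homomorphism on P^*, hence evaluation at a point x with C <= x <= B.
   Since the clopen segments form a subbase, x has a neighbourhood u /\ d with
   u final and d initial, missing B or C; then ~` d or u is a clopen final
   segment on which evaluation at x and at the ultrafilter disagree. *)

Section bool_valued_maps.
Context {T : topologicalType}.

Lemma continuous_boolP (f : T -> bool) : continuous f <-> clopen [set x | f x].
Proof.
have fT : [set x | f x] = f @^-1` [set true].
  by apply/seteqP; split => x /=; case: (f x).
split => [fcont | [fo fc] x].
  rewrite fT; split.
    by apply: open_comp => [y _|]; [exact: fcont | exact: discrete_open].
  by apply: preimage_closed => [y _|]; [exact: fcont | exact: discrete_closed].
apply/discrete_cvg; case fx: (f x).
  by apply: filterS (open_nbhs_nbhs (conj fo fx)) => y.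
have nfo : open (~` [set x | f x]) by exact: closed_openC.
apply: filterS (@open_nbhs_nbhs _ x _ (conj nfo _)) => [y /= /negP/negbTE //|].
by rewrite /= fx.
Qed.

Lemma continuous_asbool (u : set T) : clopen u -> continuous (fun x => `[< u x >]).
Proof.
move=> cu; apply/continuous_boolP.
by have -> : [set x | `[< u x >]] = u by apply/seteqP; split => x /= /asboolP.
Qed.

Lemma continuous_andb (f g : T -> bool) : continuous f -> continuous g ->
  continuous (fun x => f x && g x).
Proof.
rewrite !continuous_boolP => cf cg.
have -> : [set x | f x && g x] = [set x | f x] `&` [set x | g x].
  by apply/seteqP; split => x /=; [move/andP | move=> [-> ->]].
exact: clopenI.
Qed.

Lemma continuous_orb (f g : T -> bool) : continuous f -> continuous g ->
  continuous (fun x => f x || g x).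
Proof.
rewrite !continuous_boolP => cf cg.
have -> : [set x | f x || g x] = [set x | f x] `|` [set x | g x].
  by apply/seteqP; split => x /=; [move/orP | case=> ->; rewrite ?orbT].
exact: clopenU.
Qed.


End bool_valued_maps.

Lemma ptws_continuous_eval {I : Type} {Y : topologicalType} (i : I) :
  continuous (fun f : {ptws I -> Y} => f i).
Proof.
move=> f P /(@initial_continuous _ _ (fun g : I -> Y => g i) f).
by have /cvg_sup/(_ i) := @cvg_id _ (nbhs (f : {ptws I -> Y})); apply.
Qed.

Lemma within_continuous_net_ex {Y : topologicalType} {Z : discreteTopologicalType}
    {A : set Y} {h : Y -> Z} {I : Type} {F : set_system I} {PF : ProperFilter F}
    (phi : I -> Y) (y : Y) :
  {within A, continuous h} -> A y -> (forall i, A (phi i)) ->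
  phi @ F --> y -> exists i, h (phi i) = h y.
Proof.
move=> /subspace_continuousP hc Ay Aphi phiy.
have /discrete_cvg near_hy := hc y Ay.
have /filter_ex [i hi] : F [set i | h (phi i) = h y].
  have eventually_hy : F [set i | A (phi i) -> h (phi i) = h y] := phiy _ near_hy.
  by apply: filterS eventually_hy => i; apply; exact: Aphi.
by exists i.
Qed.

Section finite_supersets.
Variable X : eqType.

Definition fin_supersets : set_system (seq X) :=
  filter_from setT (fun s0 : seq X => [set s : seq X | {subset s0 <= s}]).

Global Instance fin_supersets_proper : ProperFilter fin_supersets.
Proof.
apply: filter_from_proper => [|s0 _]; last by exists s0.
apply: filter_from_filter; first by exists [::].
move=> s1 s2 _ _; exists (s1 ++ s2) => // s /= s12s.
by split=> x xs; apply: s12s; rewrite mem_cat xs ?orbT.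
Qed.

Lemma fin_supersets_mem (t : X) : fin_supersets [set s | t \in s].
Proof. by exists [:: t] => // s /= /(_ t); rewrite inE eqxx; apply. Qed.

End finite_supersets.

Section dual_space.
Context {T : topologicalType} {le : T -> T -> Prop}.

Lemma Pstar_cst (b : bool) : Pstar le ((fun=> b) : {ptws T -> bool}).
Proof. by split=> [|x y _]; [exact: cst_continuous | exact: implybb]. Qed.

Lemma Pstar_andb (f g : {ptws T -> bool}) : Pstar le f -> Pstar le g ->
  Pstar le ((fun x => f x && g x) : {ptws T -> bool}).
Proof.
move=> [cf mf] [cg mg]; split=> [|x y lxy]; first exact: continuous_andb.
by apply/implyP => /andP[/(implyP (mf _ _ lxy)) -> /(implyP (mg _ _ lxy)) ->].
Qed.

Lemma Pstar_orb (f g : {ptws T -> bool}) : Pstar le f -> Pstar le g ->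
  Pstar le ((fun x => f x || g x) : {ptws T -> bool}).
Proof.
move=> [cf mf] [cg mg]; split=> [|x y lxy]; first exact: continuous_orb.
apply/implyP => /orP[/(implyP (mf _ _ lxy)) -> //|/(implyP (mg _ _ lxy)) ->].
exact: orbT.
Qed.

Lemma Pstar_asbool (u : set T) : clopen u -> final_segment le u ->
  Pstar le ((fun x => `[< u x >]) : {ptws T -> bool}).
Proof.
move=> cu fu; split=> [|x y lxy]; first exact: continuous_asbool.
by apply/implyP => /asboolP ux; apply/asboolP; exact: fu ux lxy.
Qed.

Lemma Pstar_has (g : T -> {ptws T -> bool}) (s : seq T) :
  (forall t, Pstar le (g t)) ->
  Pstar le ((fun x => has (fun t => g t x) s) : {ptws T -> bool}).
Proof. by move=> Pg; elim: s => [|t s IHs]; [exact: Pstar_cst | exact: Pstar_orb]. Qed.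

Lemma Pstar_all (g : T -> {ptws T -> bool}) (s : seq T) :
  (forall t, Pstar le (g t)) ->
  Pstar le ((fun x => all (fun t => g t x) s) : {ptws T -> bool}).
Proof. by move=> Pg; elim: s => [|t s IHs]; [exact: Pstar_cst | exact: Pstar_andb]. Qed.

Lemma two_separated_Pstar : two_separated le ->
  forall x y, ~ le x y -> exists2 f, Pstar le f & f x && ~~ f y.
Proof.
move=> [I [e [econt eiff]]] x y nxy.
have /existsNP [i /negP] : ~ (forall i, e x i ==> e y i) by move/eiff.
rewrite negb_imply => exy; exists (fun z => e z i) => //; split.
  by move=> z; have := continuous_comp (econt z) (ptws_continuous_eval i (e z)); exact.
by move=> z w /eiff.
Qed.

Section lattice_homomorphism.
Context {h : {ptws T -> bool} -> bool} (hom : lattice_hom_on le h).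

Lemma lattice_hom_has (g : T -> {ptws T -> bool}) (s : seq T) :
  (forall t, Pstar le (g t)) ->
  h (fun x => has (fun t => g t x) s) = has (fun t => h (g t)) s.
Proof.
move=> Pg; case: hom => _ hor h0 _; elim: s => [|t s IHs] //=.
by rewrite hor ?IHs //; exact: Pstar_has.
Qed.

Lemma lattice_hom_all (g : T -> {ptws T -> bool}) (s : seq T) :
  (forall t, Pstar le (g t)) ->
  h (fun x => all (fun t => g t x) s) = all (fun t => h (g t)) s.
Proof.
move=> Pg; case: hom => hand _ _ h1; elim: s => [|t s IHs] //=.
by rewrite hand ?IHs //; exact: Pstar_all.
Qed.

End lattice_homomorphism.

End dual_space.

Definition clopen_final_separation {T : topologicalType} (le : T -> T -> Prop) : Prop :=
  forall B C : set T,
    closed B -> final_segment le B ->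
    closed C -> initial_segment le C ->
    set_lt le C B ->
    exists u : set T,
      [/\ clopen u, final_segment le u, B `<=` u & C `&` u = set0].

Section bidual_cover.
Context {T : topologicalType} {le : T -> T -> Prop} {h : {ptws T -> bool} -> bool}.
Hypothesis hP : Pstarstar le h.

(* A compactness argument: [f] is the pointwise limit of the functions
   [f && (g t1 || ... || g tn)], all of which [h] sends to [false]. *)
Lemma Pstarstar_false_of_cover (f : {ptws T -> bool}) : Pstar le f ->
  (forall t, f t -> exists2 g, Pstar le g & ~~ h g && g t) -> ~~ h f.
Proof.
move=> Pf cover; have [[hand _ h0 _] hcont] := hP.
have gex t : exists g : {ptws T -> bool}, [/\ Pstar le g, ~~ h g & f t -> g t].
  have [ft|nft] := boolP (f t).
    by have [g Pg /andP[hg gt]] := cover t ft; exists g.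
  by exists (fun=> false); split=> //; [exact: Pstar_cst | rewrite h0].
have [g gP] := choice gex.
have Pg t : Pstar le (g t) by case: (gP t).
pose phi s : {ptws T -> bool} := fun x => f x && has (fun t => g t x) s.
have Pphi s : Pstar le (phi s) by apply: Pstar_andb => //; exact: Pstar_has.
have phi_cvg : phi @ fin_supersets T --> (f : {ptws T -> bool}).
  apply/pointwise_cvgP => t; apply/discrete_cvg; rewrite nbhs_simpl.
  case ft: (f t); last by exists [::] => // s _; rewrite /phi /= ft.
  apply: filterS (fin_supersets_mem _ t) => s ts; rewrite /phi /= ft.
  by apply/hasP; exists t => //; case: (gP t) => _ _; apply.
have [s <-] := within_continuous_net_ex _ _ hcont Pf Pphi phi_cvg.
rewrite (hand f (fun x => has (fun t => g t x) s)) ?(lattice_hom_has hP.1 _ _ Pg) //;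
  last exact: Pstar_has.
by rewrite negb_and; apply/orP; right; apply/hasPn => t _; case: (gP t).
Qed.

Lemma Pstarstar_true_of_cover (f : {ptws T -> bool}) : Pstar le f ->
  (forall t, ~~ f t -> exists2 g, Pstar le g & h g && ~~ g t) -> h f.
Proof.
move=> Pf cover; have [[_ hor _ h1] hcont] := hP.
have gex t : exists g : {ptws T -> bool}, [/\ Pstar le g, h g & ~~ f t -> ~~ g t].
  have [ft|nft] := boolP (f t).
    by exists (fun=> true); split=> //; exact: Pstar_cst.
  by have [g Pg /andP[hg gt]] := cover t nft; exists g.
have [g gP] := choice gex.
have Pg t : Pstar le (g t) by case: (gP t).
pose phi s : {ptws T -> bool} := fun x => f x || all (fun t => g t x) s.
have Pphi s : Pstar le (phi s) by apply: Pstar_orb => //; exact: Pstar_all.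
have phi_cvg : phi @ fin_supersets T --> (f : {ptws T -> bool}).
  apply/pointwise_cvgP => t; apply/discrete_cvg; rewrite nbhs_simpl.
  case ft: (f t); first by exists [::] => // s _; rewrite /phi /= ft.
  apply: filterS (fin_supersets_mem _ t) => s ts; rewrite /phi /= ft.
  by apply/allPn; exists t => //; case: (gP t) => _ _; apply; rewrite ft.
have [s <-] := within_continuous_net_ex _ _ hcont Pf Pphi phi_cvg.
rewrite (hor f (fun x => all (fun t => g t x) s)) ?(lattice_hom_all hP.1 _ _ Pg) //;
  last exact: Pstar_all.
by apply/orP; right; apply/allP => t _; case: (gP t).
Qed.

End bidual_cover.

Section bidual_segments.
Context {T : topologicalType} (le : T -> T -> Prop) (h : {ptws T -> bool} -> bool).

Definition hom_upper : set T := [set x | forall f, Pstar le f -> h f -> f x].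
Definition hom_lower : set T := [set x | forall f, Pstar le f -> ~~ h f -> ~~ f x].

Lemma closed_hom_upper : closed hom_upper.
Proof.
have -> : hom_upper = \bigcap_(f in [set f | Pstar le f /\ h f]) [set x | f x].
  by apply/seteqP; split=> x /= xB => [f [Pf hf]|f Pf hf]; apply: xB.
by apply: closed_bigI => f [[/continuous_boolP[]]].
Qed.

Lemma closed_hom_lower : closed hom_lower.
Proof.
have -> : hom_lower = \bigcap_(f in [set f | Pstar le f /\ ~~ h f]) ~` [set x | f x].
  apply/seteqP; split=> x /= xC => [f [Pf hf]|f Pf hf]; first exact/negP/xC.
  by apply/negP; apply: xC.
by apply: closed_bigI => f [[/continuous_boolP[fo _] _] _]; exact: open_closedC.
Qed.

Lemma final_hom_upper : final_segment le hom_upper.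
Proof. by move=> x y xB lxy f Pf hf; exact: implyP (Pf.2 _ _ lxy) (xB f Pf hf). Qed.

Lemma initial_hom_lower : initial_segment le hom_lower.
Proof.
move=> x y yC lxy f Pf hf; apply/negP => fx.
by move: (yC f Pf hf); rewrite (implyP (Pf.2 _ _ lxy) fx).
Qed.

Lemma hom_lower_lt_upper : two_separated le ->
  ~ (exists x, hom_upper x /\ hom_lower x) -> set_lt le hom_lower hom_upper.
Proof.
move=> sep disj x y xC yB; split=> [|exy]; last by subst y; apply: disj; exists x.
apply: contrapT => /(two_separated_Pstar sep) [f Pf /andP[fx nfy]].
have [hf|nhf] := boolP (h f); first by move: nfy; rewrite (yB f Pf hf).
by move: (xC f Pf nhf); rewrite fx.
Qed.

End bidual_segments.

Lemma separation_reflexive {T : topologicalType} {le : T -> T -> Prop} :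
  two_separated le -> clopen_final_separation le -> reflexive_tposet le.
Proof.
move=> sep sepB h hP.
have [[x [xB xC]]|disj] := pselect (exists x, hom_upper le h x /\ hom_lower le h x).
  exists x => f Pf; have [hf|nhf] := boolP (h f); first by rewrite (xB f Pf).
  by rewrite (negbTE (xC f Pf nhf)); exact/negbTE.
have [u [cu fu Bu Cu]] := sepB _ _
  (closed_hom_upper le h) (final_hom_upper le h)
  (closed_hom_lower le h) (initial_hom_lower le h)
  (hom_lower_lt_upper le h sep disj).
have Pu := Pstar_asbool u cu fu.
have hu : h (fun x => `[< u x >]).
  apply: Pstarstar_true_of_cover hP _ Pu _ => t /asboolP ut.
  have /existsNP[g /not_implyP[Pg /not_implyP[hg gt]]] : ~ hom_upper le h t.
    by move/Bu.
  by exists g => //; rewrite hg; apply/negP.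
suff : ~~ h (fun x => `[< u x >]) by rewrite hu.
apply: Pstarstar_false_of_cover hP _ Pu _ => t /asboolP ut.
have /existsNP[g /not_implyP[Pg /not_implyP[nhg gt]]] : ~ hom_lower le h t.
  by move=> tC; have : (hom_lower le h `&` u) t by []; rewrite Cu.
by exists g => //; rewrite nhg; apply/negPn/negP.
Qed.

Lemma clopen_bigcap_ord {T : topologicalType} (n : nat) (P : 'I_n -> Prop)
    (F : 'I_n -> set T) :
  (forall i, P i -> clopen (F i)) -> clopen [set y | forall i, P i -> F i y].
Proof.
move=> cF; split; last first.
  have -> : [set y | forall i, P i -> F i y] = \bigcap_(i in P) F i by [].
  by apply: closed_bigI => i /cF [].
rewrite openE => y Fy; apply: filter_forall => i.
have [Pi|nPi] := pselect (P i); last by apply: nearW => z /nPi.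
by apply: filterS (open_nbhs_nbhs (conj (cF i Pi).1 (Fy i Pi))) => z Fz _.
Qed.

Section subbase_neighbourhoods.
Context {T : topologicalType} {le : T -> T -> Prop}.
Hypothesis subbase : is_subbase (clopen_segment le).

Lemma subbase_segment_nbhs (A : set T) (x : T) : open A -> A x ->
  exists u d : set T,
    [/\ [/\ clopen u, final_segment le u & u x],
        [/\ clopen d, initial_segment le d & d x] & u `&` d `<=` A].
Proof.
move=> oA Ax; have [n [F [FS Fx FA]]] := (subbase A).1 oA x Ax.
exists [set y | forall i, final_segment le (F i) -> F i y].
exists [set y | forall i, initial_segment le (F i) -> F i y].
split; [split | split | ].
- by apply: clopen_bigcap_ord => i _; case: (FS i).
- by move=> y z yu lyz i Fi; exact: Fi _ _ (yu i Fi) lyz.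
- by move=> i _; exact: Fx.
- by apply: clopen_bigcap_ord => i _; case: (FS i).
- by move=> y z zd lyz i Fi; exact: Fi _ _ (zd i Fi) lyz.
- by move=> i _; exact: Fx.
- by move=> y [yu yd]; apply: FA => i; case: (FS i) => _ [/yu|/yd].
Qed.

Lemma final_clopen_avoiding_point (B : set T) (x : T) : closed B ->
  (forall b, B b -> le x b) -> ~ B x ->
  exists w : set T, [/\ clopen w, final_segment le w, B `<=` w & ~ w x].
Proof.
move=> cB xB nBx.
have [u [d [[_ fu ux] [cd di dx] ud]]] := subbase_segment_nbhs _ _ (closed_openC cB) nBx.
exists (~` d); split => //; first exact: clopenC.
  by move=> y z ny lyz dz; exact: ny (di _ _ dz lyz).
by move=> b Bb db; exact: ud b (conj (fu _ _ ux (xB b Bb)) db) Bb.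
Qed.

Lemma final_clopen_nbhs_avoiding (C : set T) (x : T) : closed C ->
  (forall c, C c -> le c x) -> ~ C x ->
  exists v : set T, [/\ clopen v, final_segment le v, v x & C `&` v = set0].
Proof.
move=> cC Cx nCx.
have [u [d [[cu fu ux] [_ di dx] ud]]] := subbase_segment_nbhs _ _ (closed_openC cC) nCx.
exists u; split => //; apply/seteqP; split => // c [Cc uc].
exact: ud c (conj uc (di _ _ dx (Cx c Cc))) Cc.
Qed.

End subbase_neighbourhoods.

Section separation_ultrafilter.
Context {T : topologicalType} (le : T -> T -> Prop) (B C : set T).

Definition separation_filter : set_system T :=
  [set Q | exists f g : {ptws T -> bool},
    [/\ Pstar le f /\ B `<=` [set x | f x], Pstar le g /\ (forall x, C x -> ~~ g x)
      & [set x | f x && ~~ g x] `<=` Q]].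

Lemma separation_filter_filter : Filter separation_filter.
Proof.
constructor.
- by exists (fun=> true), (fun=> false); split=> //; split=> //; exact: Pstar_cst.
- move=> Q1 Q2 [f1 [g1 [[Pf1 Bf1] [Pg1 Cg1] fgQ1]]] [f2 [g2 [[Pf2 Bf2] [Pg2 Cg2] fgQ2]]].
  exists (fun x => f1 x && f2 x), (fun x => g1 x || g2 x); split; [split|split|].
  + exact: Pstar_andb.
  + by move=> x Bx; rewrite /= (Bf1 x Bx) (Bf2 x Bx).
  + exact: Pstar_orb.
  + by move=> x Cx; rewrite negb_or (Cg1 x Cx) (Cg2 x Cx).
  + move=> x /andP[/andP[f1x f2x]]; rewrite negb_or => /andP[g1x g2x].
    by split; [apply: fgQ1; rewrite /= f1x | apply: fgQ2; rewrite /= f2x].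
- move=> Q1 Q2 Q12 [f [g [Pf Pg fgQ]]]; exists f, g; split => // x /fgQ; exact: Q12.
Qed.

(* If [f && ~~ g] vanishes identically then [f <= g], so [[set x | f x]]
   would be a clopen final segment separating [B] from [C]. *)
Lemma separation_filter_proper :
  ~ (exists u, [/\ clopen u, final_segment le u, B `<=` u & C `&` u = set0]) ->
  ProperFilter separation_filter.
Proof.
move=> nsep; apply: Build_ProperFilter; last exact: separation_filter_filter.
move=> [f [g [[[cf mf] Bf] [Pg Cg] fg0]]]; apply: nsep.
exists [set x | f x]; split => //.
- exact/continuous_boolP.
- by move=> x y fx lxy; exact: implyP (mf _ _ lxy) fx.
- apply/seteqP; split => // x [Cx fx]; apply: (fg0 x); rewrite /= fx /=.
  exact: Cg.
Qed.

End separation_ultrafilter.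

Definition ultra_eval {T : topologicalType} (U : set_system T)
  (f : {ptws T -> bool}) : bool := `[< U [set x | f x] >].

Lemma ultra_eval_lattice_hom {T : topologicalType} (le : T -> T -> Prop)
    {U : set_system T} :
  UltraFilter U -> lattice_hom_on le (ultra_eval U).
Proof.
move=> UU; have UF : ProperFilter U := @ultra_proper _ _ UU.
rewrite /ultra_eval; split=> [f g _ _|f g _ _||].
- apply/asboolP/andP => [Ufg|[/asboolP Uf /asboolP Ug]].
    by split; apply/asboolP; apply: filterS Ufg => x /andP[].
  by apply: filterS (filterI Uf Ug) => x [/= -> ->].
- apply/asboolP/orP => [Ufg|[/asboolP Uf|/asboolP Ug]].
  + have [Uf|Unf] := in_ultra_setVsetC [set x | f x] UU; first by left; apply/asboolP.
    right; apply/asboolP; apply: filterS (filterI Ufg Unf) => x [/orP[fx|//] nfx].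
    by case: nfx.
  + by apply: filterS Uf => x /= ->.
  + by apply: filterS Ug => x /= ->; rewrite orbT.
- by apply/asboolP => U0; apply: (filter_not_empty U); apply: filterS U0.
- by apply/asboolP; apply: filterS filterT.
Qed.

Section evaluation_at_ultrafilter.
Context {T : topologicalType} {le : T -> T -> Prop} {B C : set T}.
Context {U : set_system T} (UU : UltraFilter U).
Hypothesis sepU : separation_filter le B C `<=` U.

Let UF : ProperFilter U := @ultra_proper _ _ UU.

Lemma ultra_eval_upper (f : {ptws T -> bool}) : Pstar le f ->
  B `<=` [set x | f x] -> ultra_eval U f.
Proof.
move=> Pf Bf; apply/asboolP/sepU; exists f, (fun=> false).
by split=> //; [split=> //; exact: Pstar_cst | move=> x /andP[]].
Qed.

Lemma ultra_eval_lower (g : {ptws T -> bool}) : Pstar le g ->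
  (forall x, C x -> ~~ g x) -> ~~ ultra_eval U g.
Proof.
move=> Pg Cg; apply/negP => /asboolP Ug.
have Ung : U [set x | ~~ g x].
  apply: sepU; exists (fun=> true), g.
  by split=> //; split=> //; exact: Pstar_cst.
by apply: (filter_not_empty U); apply: filterS (filterI Ug Ung) => x /= [->].
Qed.

Hypothesis CltB : set_lt le C B.

(* Near [f] in the pointwise topology, the value of a [g] at a single point of
   [C] (resp. of [B]) already decides whether [B] lies in [g] (resp. whether [g]
   vanishes on [C]). *)
Lemma ultra_eval_continuous : {within Pstar le, continuous (ultra_eval U)}.
Proof.
apply/subspace_continuousP => f Pf; apply/discrete_cvg.
have near_eq t : nbhs (f : {ptws T -> bool}) [set g : {ptws T -> bool} | g t = f t].
  exact: ptws_continuous_eval t f _ (discrete_set1 (f t)).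
case hf: (ultra_eval U f).
- have [c [Cc fc]] : exists c, C c /\ f c.
    apply: contrapT => nc; suff : ~~ ultra_eval U f by rewrite hf.
    by apply: (ultra_eval_lower _ Pf) => x Cx; apply/negP => fx; apply: nc; exists x.
  apply: filterS (near_eq c) => g /= gc Pg; rewrite /from_subspace hf.
  apply: (ultra_eval_upper _ Pg) => b Bb.
  by apply: implyP (Pg.2 _ _ (CltB c b Cc Bb).1) _; rewrite /= gc.
- have [b [Bb nfb]] : exists b, B b /\ ~~ f b.
    apply: contrapT => nb; suff : ultra_eval U f by rewrite hf.
    apply: (ultra_eval_upper _ Pf) => x Bx; apply: contrapT => /negP nfx.
    by apply: nb; exists x.
  apply: filterS (near_eq b) => g /= gb Pg; rewrite /from_subspace hf.
  apply/negbTE/(ultra_eval_lower _ Pg) => c Cc.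
  apply/negP => gc; move: (implyP (Pg.2 _ _ (CltB c b Cc Bb).1) gc).
  by rewrite gb (negbTE nfb).
Qed.

Lemma ultra_eval_point_between (x : T) : two_separated le ->
  (forall f, Pstar le f -> ultra_eval U f = f x) ->
  (forall c, C c -> le c x) /\ (forall b, B b -> le x b).
Proof.
move=> sep evx; split=> [c Cc|b Bb]; apply: contrapT.
  move=> /(two_separated_Pstar sep) [f Pf /andP[fc nfx]].
  suff : ultra_eval U f by rewrite (evx f Pf) (negbTE nfx).
  apply: (ultra_eval_upper _ Pf) => b Bb.
  exact: implyP (Pf.2 _ _ (CltB c b Cc Bb).1) fc.
move=> /(two_separated_Pstar sep) [f Pf /andP[fx nfb]].
suff : ~~ ultra_eval U f by rewrite (evx f Pf) fx.
apply: (ultra_eval_lower _ Pf) => c Cc.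
apply/negP => fc; move: (implyP (Pf.2 _ _ (CltB c b Cc Bb).1) fc).
by rewrite (negbTE nfb).
Qed.

End evaluation_at_ultrafilter.

Lemma reflexive_separation {T : topologicalType} {le : T -> T -> Prop} :
  two_separated le -> is_subbase (clopen_segment le) -> reflexive_tposet le ->
  clopen_final_separation le.
Proof.
move=> sep subbase refl B C cB _ cC _ CltB; apply: contrapT => nsep.
have [U [UU sepU]] := ultraFilterLemma (separation_filter_proper _ _ _ nsep).
have [x evx] := refl _ (conj (ultra_eval_lattice_hom le UU)
                              (ultra_eval_continuous UU sepU CltB)).
have [Cx xB] := ultra_eval_point_between UU sepU CltB x sep evx.
have [Cxx|nCx] := pselect (C x).
- have nBx : ~ B x by move=> Bx; have [_] := CltB x x Cxx Bx.
  have [w [cw fw Bw nwx]] := final_clopen_avoiding_point subbase _ _ cB xB nBx.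
  have Pw := Pstar_asbool w cw fw.
  suff : ultra_eval U (fun y => `[< w y >]) by rewrite (evx _ Pw) => /asboolP.
  by apply: (ultra_eval_upper sepU _ Pw) => b /Bw /asboolP.
- have [v [cv fv vx Cv]] := final_clopen_nbhs_avoiding subbase _ _ cC Cx nCx.
  have Pv := Pstar_asbool v cv fv.
  suff : ~~ ultra_eval U (fun y => `[< v y >]) by rewrite (evx _ Pv) asboolT.
  apply: (ultra_eval_lower UU sepU _ Pv) => c Cc; apply/negP => /asboolP vc.
  by have : (C `&` v) c by []; rewrite Cv.
Qed.

Theorem mainTheorem15 (T : topologicalType) (le : T -> T -> Prop) :
  is_poset le -> hausdorff_space T ->
  two_separated le ->
  is_subbase (clopen_segment le) ->
  reflexive_tposet le <->
  (forall B C : set T,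
      closed B -> final_segment le B ->
      closed C -> initial_segment le C ->
      set_lt le C B ->
      exists u : set T,
        [/\ clopen u, final_segment le u, B `<=` u & C `&` u = set0]).
Proof.
move=> _ _ sep subbase; split.
  exact: reflexive_separation.
exact: separation_reflexive.
Qed.
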